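(* Let $(\mathcal{T},[1],\Delta)$ be a triangulated category and $\mathcal{N}$ a triangulated subcategory of $\mathcal{T}$. Let $\mathcal{U},\mathcal{V}$ be additive subcategories of $\mathcal{T}$ such that $(\mathcal{U},\mathcal{U}^{\perp})$ and $({}^{\perp}\mathcal{V},\mathcal{V})$ are torsion pairs in $\mathcal{T}$. Assume that $\mathcal{X}=\mathcal{U}\cap\mathcal{V}\cap\mathcal{N}$ is closed under direct summands, $\mathcal{U}^{\perp}[-1]\subseteq\mathcal{V}\cap\mathcal{N}$ and ${}^{\perp}\mathcal{V}[1]\subseteq\mathcal{U}\cap\mathcal{N}$. Then: (i) $(\mathcal{U},\mathcal{X},\mathcal{V})$ is an $\mathcal{N}$-localization triple; (ii) if ${}^{\perp}\mathcal{V}[1]=\mathcal{U}\cap\mathcal{N}$, then $(\mathcal{U},\mathcal{X},\mathcal{V})$ satisfies the Verdier condition; (iii) if $\mathcal{U}^{\perp}[-1]=\mathcal{V}\cap\mathcal{N}$, then $(\mathcal{U},\mathcal{X},\mathcal{V})$ satisfies the Verdier condition.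
   Context: $\Delta$ denotes the class of distinguished triangles of $\mathcal{T}$; all subcategories are full, additive and closed under isomorphisms. $\mathcal{U}^{\perp}=\{T\in\mathcal{T}:\mathrm{Hom}_{\mathcal{T}}(\mathcal{U},T)=0\}$, ${}^{\perp}\mathcal{V}=\{T:\mathrm{Hom}_{\mathcal{T}}(T,\mathcal{V})=0\}$. A pair $(\mathcal{C},\mathcal{D})$ of additive subcategories is a torsion pair if $\mathrm{Hom}_{\mathcal{T}}(\mathcal{C},\mathcal{D})=0$ and every $T\in\mathcal{T}$ admits a triangle $C\to T\to D\to C[1]$ in $\Delta$ with $C\in\mathcal{C}$, $D\in\mathcal{D}$. For additive subcategories $\mathcal{X}\subseteq\mathcal{C}$, the factor category $\mathcal{C}/[\mathcal{X}]$ has the objects of $\mathcal{C}$ and morphisms $\mathrm{Hom}_{\mathcal{T}}(A,B)$ modulo those factoring through an object of $\mathcal{X}$; $\underline{f}$ is the class of $f$. For a subcategory $\mathcal{Y}$, a morphism $f\colon A\to B$ is $\mathcal{Y}$-monic if $\mathrm{Hom}_{\mathcal{T}}(B,Y)\to\mathrm{Hom}_{\mathcal{T}}(A,Y)$ is surjective for all $Y\in\mathcal{Y}$, $\mathcal{Y}$-epic dually; a $\mathcal{Y}$-preenvelope of $A$ is a $\mathcal{Y}$-monic $A\to Y$ with $Y\in\mathcal{Y}$, a $\mathcal{Y}$-precover is a $\mathcal{Y}$-epic $Y\to A$ with $Y\in\mathcal{Y}$. For additive subcategories $\mathcal{U},\mathcal{V}\supseteq\mathcal{X}$ of an additive subcategory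 $\mathcal{A}$, put $\mathcal{U}^{\perp_{\mathcal{A}/[\mathcal{X}]}}=\{W\in\mathcal{A}:\mathrm{Hom}_{\mathcal{A}/[\mathcal{X}]}(\mathcal{U},W)=0\}$ and ${}^{\perp_{\mathcal{A}/[\mathcal{X}]}}\mathcal{V}=\{W\in\mathcal{A}:\mathrm{Hom}_{\mathcal{A}/[\mathcal{X}]}(W,\mathcal{V})=0\}$. A triple $(\mathcal{U},\mathcal{X},\mathcal{V})$ with $\mathcal{X}\subseteq\mathcal{U}\cap\mathcal{V}$ and $\mathcal{U},\mathcal{V}\subseteq\mathcal{A}$ is a localization triple of $\mathcal{A}$ if: (a) each $A\in\mathcal{A}$ admits a triangle $A[-1]\to W_A\to Q(A)\xrightarrow{r_A}A$ in $\Delta$ with $r_A$ a $\mathcal{U}$-precover and $W_A\in\mathcal{U}^{\perp_{\mathcal{A}/[\mathcal{X}]}}$; (b) each $A\in\mathcal{A}$ admits a triangle $A\xrightarrow{j^A}R(A)\to W^A\to A[1]$ in $\Delta$ with $j^A$ a $\mathcal{V}$-preenvelope and $W^A\in{}^{\perp_{\mathcal{A}/[\mathcal{X}]}}\mathcal{V}$; (c) if $A\in\mathcal{V}$ then $Q(A)\in\mathcal{U}\cap\mathcal{V}$ and $W_A\in(\mathcal{U}\cap\mathcal{V})^{\perp_{\mathcal{V}/[\mathcal{X}]}}$, and if $A\in\mathcal{U}$ then $R(A)\in\mathcal{U}\cap\mathcal{V}$ and $W^A\in{}^{\perp_{\mathcal{U}/[\mathcal{X}]}}(\mathcal{U}\cap\mathcal{V})$.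 A localization triple $(\mathcal{U},\mathcal{X},\mathcal{V})$ of $\mathcal{T}$ is an $\mathcal{N}$-localization triple if $\mathcal{X}=\mathcal{U}\cap\mathcal{V}\cap\mathcal{N}$ and $\mathcal{U}^{\perp_{\mathcal{T}/[\mathcal{X}]}}\subseteq\mathcal{N}$, ${}^{\perp_{\mathcal{T}/[\mathcal{X}]}}\mathcal{V}\subseteq\mathcal{N}$. It satisfies the Verdier condition if for every triangle $A\xrightarrow{s}B\to N\to A[1]$ in $\Delta$ with $A,B\in\mathcal{U}\cap\mathcal{V}$ and $N\in\mathcal{N}$, $\underline{s}$ is an isomorphism in $(\mathcal{U}\cap\mathcal{V})/[\mathcal{X}]$. *)

From HB Require Import structures.
From mathcomp Require Import all_boot all_algebra.
Set Implicit Arguments.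
Unset Strict Implicit.
Unset Printing Implicit Defensive.
Import GRing.Theory.
Local Open Scope ring_scope.

Record CatData := {
  Obj : Type;
  Hom : Obj -> Obj -> zmodType;
  comp : forall A B C : Obj, Hom B C -> Hom A B -> Hom A C;
  idm : forall A : Obj, Hom A A;
  (* a chosen zero object and chosen biproducts *)
  zobj : Obj;
  bp : Obj -> Obj -> Obj;
  bi1 : forall A B, Hom A (bp A B);
  bi2 : forall A B, Hom B (bp A B);
  bp1 : forall A B, Hom (bp A B) A;
  bp2 : forall A B, Hom (bp A B) B;
  (* the shift functor [1] and a quasi-inverse [-1] *)
  sh : Obj -> Obj;
  shm : forall A B, Hom A B -> Hom (sh A) (sh B);
  ush : Obj -> Obj;
  ushm : forall A B, Hom A B -> Hom (ush A) (ush B);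
  eta : forall A, Hom A (ush (sh A));
  eps : forall A, Hom (sh (ush A)) A
}.

Arguments comp {c A B C}.
Arguments idm {c}.
Arguments zobj {c}.
Arguments bp {c}.
Arguments bi1 {c A B}.
Arguments bi2 {c A B}.
Arguments bp1 {c A B}.
Arguments bp2 {c A B}.
Arguments sh {c}.
Arguments shm {c A B}.
Arguments ush {c}.
Arguments ushm {c A B}.
Arguments eta {c}.
Arguments eps {c}.

Notation "g \oc f" := (comp g f) (at level 40, left associativity).

Definition is_iso (D : CatData) (A B : Obj D) (f : Hom A B) : Prop :=
  exists g : Hom B A, g \oc f = idm A /\ f \oc g = idm B.

Definition isomorphic (D : CatData) (A B : Obj D) : Prop :=
  exists f : Hom A B, is_iso f.

Definition additive_cat (D : CatData) : Prop :=
  [/\ (forall (A B C E : Obj D) (h : Hom C E) (g : Hom B C) (f : Hom A B),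
         h \oc (g \oc f) = (h \oc g) \oc f),
      (forall (A B : Obj D) (f : Hom A B), idm B \oc f = f /\ f \oc idm A = f),
      (forall (A B C : Obj D) (g g' : Hom B C) (f : Hom A B),
         (g + g') \oc f = g \oc f + g' \oc f),
      (forall (A B C : Obj D) (g : Hom B C) (f f' : Hom A B),
         g \oc (f + f') = g \oc f + g \oc f') &
      (((forall (A : Obj D) (f g : Hom zobj A), f = g) /\
        (forall (A : Obj D) (f g : Hom A zobj), f = g)) /\
      (forall A B : Obj D,
         [/\ @bp1 D A B \oc @bi1 D A B = idm A, @bp2 D A B \oc @bi2 D A B = idm B,
             @bp1 D A B \oc @bi2 D A B = 0,
             @bp2 D A B \oc @bi1 D A B = 0 &
             @bi1 D A B \oc @bp1 D A B + @bi2 D A B \oc @bp2 D A B = idm (bp A B)]))].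

Definition shift_autoequiv (D : CatData) : Prop :=
  [/\ ((forall A : Obj D, shm (idm A) = idm (sh A)) /\
       (forall (A B C : Obj D) (g : Hom B C) (f : Hom A B),
          shm (g \oc f) = shm g \oc shm f) /\
       (forall (A B : Obj D) (f g : Hom A B), shm (f + g) = shm f + shm g)),
      ((forall A : Obj D, ushm (idm A) = idm (ush A)) /\
       (forall (A B C : Obj D) (g : Hom B C) (f : Hom A B),
          ushm (g \oc f) = ushm g \oc ushm f) /\
       (forall (A B : Obj D) (f g : Hom A B), ushm (f + g) = ushm f + ushm g)),
      ((forall A : Obj D, is_iso (eta A)) /\
       (forall (A B : Obj D) (f : Hom A B),
          ushm (shm f) \oc eta A = eta B \oc f)) &
      ((forall A : Obj D, is_iso (eps A)) /\
       (forall (A B : Obj D) (f : Hom A B),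
          f \oc eps A = eps B \oc shm (ushm f)))].

Record triangle (D : CatData) := Tri {
  tA : Obj D; tB : Obj D; tC : Obj D;
  tf : Hom tA tB; tg : Hom tB tC; th : Hom tC (sh tA) }.
Arguments Tri {D tA tB tC}.

Definition tri_mor (D : CatData) (T T' : triangle D)
  (a : Hom (tA T) (tA T')) (b : Hom (tB T) (tB T')) (c : Hom (tC T) (tC T')) :=
  [/\ b \oc tf T = tf T' \oc a, c \oc tg T = tg T' \oc b &
      shm a \oc th T = th T' \oc c].

Arguments tri_mor {D} T T' a b c.

Definition tri_iso (D : CatData) (T T' : triangle D) : Prop :=
  exists a b c, [/\ tri_mor T T' a b c, is_iso a, is_iso b & is_iso c].

Definition TR1 (D : CatData) (dist : triangle D -> Prop) : Prop :=
  [/\ (forall T T', tri_iso T T' -> dist T -> dist T'),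
      (forall A : Obj D,
         dist (Tri (idm A) (0 : Hom A zobj) (0 : Hom zobj (sh A)))) &
      (forall (A B : Obj D) (f : Hom A B),
         exists C (g : Hom B C) (h : Hom C (sh A)), dist (Tri f g h))].

Definition TR2 (D : CatData) (dist : triangle D -> Prop) : Prop :=
  forall (A B C : Obj D) (f : Hom A B) (g : Hom B C) (h : Hom C (sh A)),
    dist (Tri f g h) <-> dist (Tri g h (- shm f)).

Definition TR3 (D : CatData) (dist : triangle D -> Prop) : Prop :=
  forall (T T' : triangle D) (a : Hom (tA T) (tA T')) (b : Hom (tB T) (tB T')),
    dist T -> dist T' -> b \oc tf T = tf T' \oc a ->
    exists c : Hom (tC T) (tC T'),
      c \oc tg T = tg T' \oc b /\ shm a \oc th T = th T' \oc c.

Definition TR4 (D : CatData) (dist : triangle D -> Prop) : Prop :=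
  forall (A B C C' A' B' : Obj D) (f : Hom A B) (g : Hom B C)
    (f' : Hom B C') (f'' : Hom C' (sh A))
    (g' : Hom C A') (g'' : Hom A' (sh B))
    (h' : Hom C B') (h'' : Hom B' (sh A)),
    dist (Tri f f' f'') -> dist (Tri g g' g'') -> dist (Tri (g \oc f) h' h'') ->
    exists (u : Hom C' B') (v : Hom B' A'),
      [/\ dist (Tri u v (shm f' \oc g'')),
          u \oc f' = h' \oc g, h'' \oc u = f'',
          v \oc h' = g' & g'' \oc v = shm f \oc h''].

Record TriCat := {
  tdata :> CatData;
  dist : triangle tdata -> Prop;
  tc_additive : additive_cat tdata;
  tc_shift : shift_autoequiv tdata;
  tc_TR1 : TR1 dist;
  tc_TR2 : TR2 dist;
  tc_TR3 : TR3 dist;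
  tc_TR4 : TR4 dist }.

(* Subcategories (full, given by a predicate on objects).              *)
Section Sub.
Context {T : TriCat}.
Implicit Types P Q S U V X N Amb : Obj T -> Prop.

Definition capP P Q : Obj T -> Prop := fun A => P A /\ Q A.
Definition allP : Obj T -> Prop := fun _ => True.
Definition subP P Q : Prop := forall A, P A -> Q A.
Definition eqP' P Q : Prop := forall A, P A <-> Q A.

Definition iso_closed P : Prop :=
  forall A B : Obj T, isomorphic A B -> P A -> P B.

Definition additive_subcat P : Prop :=
  [/\ iso_closed P, P zobj & forall A B, P A -> P B -> P (bp A B)].

Definition summand_closed P : Prop :=
  forall A B : Obj T, P (bp A B) -> P A /\ P B.

Definition triangulated_subcat N : Prop :=
  [/\ additive_subcat N, (forall A, N A -> N (sh A)),
      (forall A, N A -> N (ush A)) &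
      (forall t : triangle T, dist t -> N (tA t) -> N (tB t) -> N (tC t))].

(* P[1] and P[-1] (closed under isomorphisms) *)
Definition shift_up P : Obj T -> Prop :=
  fun Y : Obj T => exists A, P A /\ isomorphic Y (sh A).
Definition shift_down P : Obj T -> Prop :=
  fun Y : Obj T => exists A, P A /\ isomorphic Y (ush A).

Definition rperp P : Obj T -> Prop :=
  fun Y : Obj T => forall A, P A -> forall f : Hom A Y, f = 0.
Definition lperp P : Obj T -> Prop :=
  fun Y : Obj T => forall A, P A -> forall f : Hom Y A, f = 0.

Definition torsion_pair P Q : Prop :=
  [/\ additive_subcat P, additive_subcat Q,
      (forall A B, P A -> Q B -> forall f : Hom A B, f = 0) &
      (forall Y : Obj T, exists (A B : Obj T) (f : Hom A Y) (g : Hom Y B)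
         (h : Hom B (sh A)), [/\ dist (Tri f g h), P A & Q B])].

(* f is zero in the factor category modulo [X] *)
Definition factors_through X (A B : Obj T) (f : Hom A B) : Prop :=
  exists Y, X Y /\ exists (g : Hom A Y) (h : Hom Y B), f = h \oc g.

Definition qrperp Amb X S : Obj T -> Prop :=
  fun W => Amb W /\ forall A, S A -> forall f : Hom A W, factors_through X f.
Definition qlperp Amb X S : Obj T -> Prop :=
  fun W => Amb W /\ forall A, S A -> forall f : Hom W A, factors_through X f.

Definition Ymonic Y (A B : Obj T) (f : Hom A B) : Prop :=
  forall Z, Y Z -> forall g : Hom A Z, exists g' : Hom B Z, g' \oc f = g.
Definition Yepic Y (A B : Obj T) (f : Hom A B) : Prop :=
  forall Z, Y Z -> forall g : Hom Z B, exists g' : Hom Z A, f \oc g' = g.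
Definition preenvelope Y (A B : Obj T) (f : Hom A B) : Prop := Y B /\ Ymonic Y f.
Definition precover Y (A B : Obj T) (f : Hom A B) : Prop := Y A /\ Yepic Y f.

(* localization triple (U, X, V) of the additive subcategory Amb.
   The triangles of (a), (b) are those constrained by (c). *)
Definition loc_triple Amb U X V : Prop :=
  [/\ [/\ additive_subcat Amb, additive_subcat U, additive_subcat V &
          additive_subcat X],
      subP X (capP U V), (subP U Amb /\ subP V Amb),
      (* (a) and first half of (c) *)
      (forall A, Amb A ->
         exists (W Q : Obj T) (a : Hom (ush A) W) (b : Hom W Q)
                (c : Hom Q (sh (ush A))),
           [/\ dist (Tri a b c), precover U (eps A \oc c), qrperp Amb X U W &
               (V A -> capP U V Q /\ qrperp V X (capP U V) W)]) &
      (* (b) and second half of (c) *)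
      (forall A, Amb A ->
         exists (R W : Obj T) (j : Hom A R) (b : Hom R W) (c : Hom W (sh A)),
           [/\ dist (Tri j b c), preenvelope V j, qlperp Amb X V W &
               (U A -> capP U V R /\ qlperp U X (capP U V) W)])].

Definition N_loc_triple N U X V : Prop :=
  [/\ loc_triple allP U X V, eqP' X (capP (capP U V) N),
      subP (qrperp allP X U) N & subP (qlperp allP X V) N].

(* the class of s is an isomorphism in (U cap V)/[X] *)
Definition quot_iso X (A B : Obj T) (s : Hom A B) : Prop :=
  exists t : Hom B A,
    factors_through X (t \oc s - idm A) /\ factors_through X (s \oc t - idm B).

Definition verdier_cond N U X V : Prop :=
  forall (A B M : Obj T) (s : Hom A B) (g : Hom B M) (h : Hom M (sh A)),
    dist (Tri s g h) -> capP U V A -> capP U V B -> N M -> quot_iso X s.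

End Sub.

(* Everything is driven by the torsion triangles Q -> A -> D -> Q[1] (Q in U,
   D in U^perp) and C -> A -> R -> C[1] (C in ^perp V, R in V), where by hypothesis
   D[-1] lies in V /\ N and C[1] in U /\ N.  Whenever a map of such a triangle is
   forced to vanish, the triangle splits and, X being closed under summands, the
   extra summand lies in X.  In this way morphisms from U to V /\ N, and from
   U /\ N to V, factor through X; this gives the perpendicularity conditions
   modulo [X] and their containment in N.  The approximation triangles are the
   torsion triangles, corrected by an octahedron when A lies in V (resp. U): the
   connecting map of the octahedral triangle vanishes, so the new cone is the old
   one plus a shift of C[1] (resp. D[-1]), which lies in X.  For the Verdier
   condition, either extra equality kills all maps from U /\ N to V[1] (resp. from
   U to (V /\ N)[1]); then, for s with cone in N, both t s and s t differ from the
   identity by maps factoring through X, for suitable t. *)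

From Pilot Require Import Defs.
From HB Require Import structures.
From mathcomp Require Import all_boot all_algebra.
From Stdlib Require Import Classical.
Set Implicit Arguments. Unset Strict Implicit. Unset Printing Implicit Defensive.
Import GRing.Theory.
Local Open Scope ring_scope.
Local Notation Hom := Defs.Hom.
Local Notation eta := Defs.eta.
Local Notation allP := Defs.allP.

Section AdditiveCategory.
Variable T : TriCat.
Implicit Types A B C Z : Obj T.

Lemma compA A B C E (h : Hom C E) (g : Hom B C) (f : Hom A B) :
  h \oc (g \oc f) = (h \oc g) \oc f.
Proof. by case: (tc_additive T) => H _ _ _ _; apply: H. Qed.

Lemma comp1l A B (f : Hom A B) : idm B \oc f = f.
Proof. by case: (tc_additive T) => _ H _ _ _; case: (H _ _ f). Qed.

Lemma comp1r A B (f : Hom A B) : f \oc idm A = f.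
Proof. by case: (tc_additive T) => _ H _ _ _; case: (H _ _ f). Qed.

Lemma compDl A B C (g g' : Hom B C) (f : Hom A B) :
  (g + g') \oc f = g \oc f + g' \oc f.
Proof. by case: (tc_additive T) => _ _ H _ _; apply: H. Qed.

Lemma compDr A B C (g : Hom B C) (f f' : Hom A B) :
  g \oc (f + f') = g \oc f + g \oc f'.
Proof. by case: (tc_additive T) => _ _ _ H _; apply: H. Qed.

Lemma comp0l A B C (f : Hom A B) : (0 : Hom B C) \oc f = 0.
Proof. by apply: (addrI ((0 : Hom B C) \oc f)); rewrite -compDl !addr0. Qed.

Lemma comp0r A B C (g : Hom B C) : g \oc (0 : Hom A B) = 0.
Proof. by apply: (addrI (g \oc (0 : Hom A B))); rewrite -compDr !addr0. Qed.

Lemma compNl A B C (g : Hom B C) (f : Hom A B) : (- g) \oc f = - (g \oc f).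
Proof. by apply: (addrI (g \oc f)); rewrite -compDl !subrr comp0l. Qed.

Lemma compNr A B C (g : Hom B C) (f : Hom A B) : g \oc (- f) = - (g \oc f).
Proof. by apply: (addrI (g \oc f)); rewrite -compDr !subrr comp0r. Qed.

Lemma compBl A B C (g g' : Hom B C) (f : Hom A B) :
  (g - g') \oc f = g \oc f - g' \oc f.
Proof. by rewrite compDl compNl. Qed.

Lemma compBr A B C (g : Hom B C) (f f' : Hom A B) :
  g \oc (f - f') = g \oc f - g \oc f'.
Proof. by rewrite compDr compNr. Qed.

Lemma bpE A B :
  [/\ @bp1 T A B \oc bi1 = idm A, @bp2 T A B \oc bi2 = idm B,
      @bp1 T A B \oc bi2 = 0, @bp2 T A B \oc bi1 = 0 &
      bi1 \oc bp1 + bi2 \oc bp2 = idm (bp A B)].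
Proof. by case: (tc_additive T) => _ _ _ _ [_ H]; apply: H. Qed.

Lemma iso_lcancel A B Z (f : Hom A B) (u v : Hom Z A) :
  is_iso f -> f \oc u = f \oc v -> u = v.
Proof. by case=> g [gf _] e; rewrite -(comp1l u) -(comp1l v) -gf -!compA e. Qed.

Lemma iso_rcancel A B Z (f : Hom A B) (u v : Hom B Z) :
  is_iso f -> u \oc f = v \oc f -> u = v.
Proof. by case=> g [_ fg] e; rewrite -(comp1r u) -(comp1r v) -fg !compA e. Qed.

Lemma is_iso_id A : is_iso (idm A).
Proof. by exists (idm A); rewrite comp1l. Qed.

Lemma is_iso_comp A B C (g : Hom B C) (f : Hom A B) :
  is_iso f -> is_iso g -> is_iso (g \oc f).
Proof.
case=> f' [f1 f2] [g' [g1 g2]]; exists (f' \oc g'); split.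
  by rewrite -compA (compA g') g1 comp1l f1.
by rewrite -compA (compA f) f2 comp1l g2.
Qed.

Lemma is_iso_opp A B (f : Hom A B) : is_iso f -> is_iso (- f).
Proof. by case=> g [g1 g2]; exists (- g); rewrite !compNl !compNr !opprK. Qed.

Lemma isomorphic_refl A : isomorphic A A.
Proof. by exists (idm A); apply: is_iso_id. Qed.

Lemma isomorphic_sym A B : isomorphic A B -> isomorphic B A.
Proof. by case=> f [g [g1 g2]]; exists g, f. Qed.

Lemma isomorphic_trans A B C : isomorphic A B -> isomorphic B C -> isomorphic A C.
Proof. by case=> f fi [g gi]; exists (g \oc f); apply: is_iso_comp. Qed.

Lemma isomorphic_split_bp A B C (f : Hom A B) (g : Hom B C) (p : Hom B A) (s : Hom C B) :
  p \oc f = idm A -> g \oc s = idm C -> f \oc p + s \oc g = idm B ->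
  p \oc s = 0 -> g \oc f = 0 -> isomorphic B (bp A C).
Proof.
move=> pf gs fpsg ps gf; have [e1 e2 e3 e4 e5] := bpE A C.
exists (bi1 \oc p + bi2 \oc g), (f \oc bp1 + s \oc bp2).
rewrite !compDl !compDr -!compA !(compA p) !(compA g) !(compA bp1) !(compA bp2).
by rewrite pf gs ps gf e1 e2 e3 e4 !comp0l !comp0r !comp1l !addr0 !add0r.
Qed.

End AdditiveCategory.

Section Shift.
Variable T : TriCat.
Implicit Types A B C Z : Obj T.

Lemma shm1 A : shm (idm A) = idm (sh A).
Proof. by case: (tc_shift T) => [[H _] _ _ _]. Qed.

Lemma shmM A B C (g : Hom B C) (f : Hom A B) : shm (g \oc f) = shm g \oc shm f.
Proof. by case: (tc_shift T) => [[_ [H _]] _ _ _]. Qed.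

Lemma shmD A B (f g : Hom A B) : shm (f + g) = shm f + shm g.
Proof. by case: (tc_shift T) => [[_ [_ H]] _ _ _]. Qed.

Lemma shm0 A B : shm (0 : Hom A B) = 0.
Proof. by apply: (addrI (shm (0 : Hom A B))); rewrite -shmD !addr0. Qed.

Lemma shmN A B (f : Hom A B) : shm (- f) = - shm f.
Proof. by apply: (addrI (shm f)); rewrite -shmD !subrr shm0. Qed.

Lemma shmB A B (f g : Hom A B) : shm (f - g) = shm f - shm g.
Proof. by rewrite shmD shmN. Qed.

Lemma ushm1 A : ushm (idm A) = idm (ush A).
Proof. by case: (tc_shift T) => [_ [H _] _ _]. Qed.

Lemma ushmM A B C (g : Hom B C) (f : Hom A B) : ushm (g \oc f) = ushm g \oc ushm f.
Proof. by case: (tc_shift T) => [_ [_ [H _]] _ _]. Qed.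

Lemma ushmD A B (f g : Hom A B) : ushm (f + g) = ushm f + ushm g.
Proof. by case: (tc_shift T) => [_ [_ [_ H]] _ _]. Qed.

Lemma ushm0 A B : ushm (0 : Hom A B) = 0.
Proof. by apply: (addrI (ushm (0 : Hom A B))); rewrite -ushmD !addr0. Qed.

Lemma eta_iso A : is_iso (eta A : Hom A (ush (sh A))).
Proof. by case: (tc_shift T) => [_ _ [H _] _]. Qed.

Lemma eta_nat A B (f : Hom A B) : ushm (shm f) \oc eta A = eta B \oc f.
Proof. by case: (tc_shift T) => [_ _ [_ H] _]. Qed.

Lemma eps_iso A : is_iso (eps A : Hom (sh (ush A)) A).
Proof. by case: (tc_shift T) => [_ _ _ [H _]]. Qed.

Lemma eps_nat A B (f : Hom A B) : f \oc eps A = eps B \oc shm (ushm f).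
Proof. by case: (tc_shift T) => [_ _ _ [_ H]]. Qed.

Lemma shm_inj A B (u v : Hom A B) : shm u = shm v -> u = v.
Proof. by move=> e; apply: (iso_lcancel (eta_iso B)); rewrite -!eta_nat e. Qed.

Lemma ushm_inj A B (u v : Hom A B) : ushm u = ushm v -> u = v.
Proof. by move=> e; apply: (iso_rcancel (eps_iso A)); rewrite !eps_nat e. Qed.

Lemma shm_surj A B (c : Hom (sh A) (sh B)) : exists x : Hom A B, shm x = c.
Proof.
have [ei [_ ei2]] := eta_iso B.
exists (ei \oc (ushm c \oc eta A)).
apply: ushm_inj; apply: (iso_rcancel (eta_iso A)).
by rewrite eta_nat !compA ei2 comp1l.
Qed.

Lemma isomorphic_sh A B : isomorphic A B -> isomorphic (sh A) (sh B).
Proof.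
case=> f [g [g1 g2]]; exists (shm f), (shm g).
by rewrite -!shmM g1 g2 !shm1.
Qed.

Lemma isomorphic_ush A B : isomorphic A B -> isomorphic (ush A) (ush B).
Proof.
case=> f [g [g1 g2]]; exists (ushm f), (ushm g).
by rewrite -!ushmM g1 g2 !ushm1.
Qed.

Lemma isomorphic_eta A : isomorphic A (ush (sh A)).
Proof. by exists (eta A); apply: eta_iso. Qed.

Lemma isomorphic_eps A : isomorphic (sh (ush A)) A.
Proof. by exists (eps A); apply: eps_iso. Qed.

Lemma ush_bp A B : isomorphic (ush (bp A B)) (bp (ush A) (ush B)).
Proof.
have [e1 e2 e3 e4 e5] := bpE A B.
apply: (@isomorphic_split_bp _ _ _ _ (ushm bi1) (ushm bp2) (ushm bp1) (ushm bi2)).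
- by rewrite -ushmM e1 ushm1.
- by rewrite -ushmM e2 ushm1.
- by rewrite -!ushmM -ushmD e5 ushm1.
- by rewrite -ushmM e3 ushm0.
- by rewrite -ushmM e4 ushm0.
Qed.

End Shift.

Section Triangles.
Variable T : TriCat.
Implicit Types A B C Z : Obj T.

Lemma dist_rot A B C (f : Hom A B) (g : Hom B C) (h : Hom C (sh A)) :
  dist (Tri f g h) -> dist (Tri g h (- shm f)).
Proof. exact: (proj1 (@tc_TR2 T _ _ _ f g h)). Qed.

Lemma dist_rotK A B C (f : Hom A B) (g : Hom B C) (h : Hom C (sh A)) :
  dist (Tri g h (- shm f)) -> dist (Tri f g h).
Proof. exact: (proj2 (@tc_TR2 T _ _ _ f g h)). Qed.

Lemma dist_rot2 A B C (f : Hom A B) (g : Hom B C) (h : Hom C (sh A)) :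
  dist (Tri f g h) -> dist (Tri h (- shm f) (- shm g)).
Proof. by move=> /dist_rot /dist_rot. Qed.

Lemma dist_idm A : dist (Tri (idm A) (0 : Hom A zobj) (0 : Hom zobj (sh A))).
Proof. by case: (@tc_TR1 T). Qed.

Lemma dist_cone A B (f : Hom A B) :
  exists C (g : Hom B C) (h : Hom C (sh A)), dist (Tri f g h).
Proof. by case: (@tc_TR1 T) => _ _ H; apply: H. Qed.

Lemma dist_iso A B C A' B' C' (f : Hom A B) (g : Hom B C) (h : Hom C (sh A))
    (f' : Hom A' B') (g' : Hom B' C') (h' : Hom C' (sh A'))
    (a : Hom A A') (b : Hom B B') (c : Hom C C') :
  b \oc f = f' \oc a -> c \oc g = g' \oc b -> shm a \oc h = h' \oc c ->
  is_iso a -> is_iso b -> is_iso c ->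
  dist (Tri f g h) -> dist (Tri f' g' h').
Proof.
move=> e1 e2 e3 ia ib ic d; case: (@tc_TR1 T) => H _ _.
by apply: (H (Tri f g h)) => //; exists a, b, c.
Qed.

Lemma dist_complete A B C A' B' C' (f : Hom A B) (g : Hom B C) (h : Hom C (sh A))
    (f' : Hom A' B') (g' : Hom B' C') (h' : Hom C' (sh A'))
    (a : Hom A A') (b : Hom B B') :
  dist (Tri f g h) -> dist (Tri f' g' h') -> b \oc f = f' \oc a ->
  exists c : Hom C C', c \oc g = g' \oc b /\ shm a \oc h = h' \oc c.
Proof. exact: (@tc_TR3 T (Tri f g h) (Tri f' g' h') a b). Qed.

Lemma dist_zero_idm Z : dist (Tri (0 : Hom zobj Z) (idm Z) (0 : Hom Z (sh zobj))).
Proof.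
apply: (dist_iso (a := idm zobj) (b := eps Z) (c := - eps Z) _ _ _ _
  (eps_iso Z) (is_iso_opp (eps_iso Z)) (dist_rot2 (dist_idm (ush Z)))).
- by rewrite comp0r comp0l.
- by rewrite compNl compNr shm1 comp1r comp1l opprK.
- by rewrite shm0 oppr0 !comp0r comp0l.
- exact: is_iso_id.
Qed.

Lemma dist_comp0 A B C (f : Hom A B) (g : Hom B C) (h : Hom C (sh A)) :
  dist (Tri f g h) -> g \oc f = 0.
Proof.
move=> d; have [c [e1 _]] := dist_complete (dist_idm A) d (a := idm A) (b := f) erefl.
by move: e1; rewrite /= comp0r => <-.
Qed.

Lemma dist_lift_fst A B C (f : Hom A B) (g : Hom B C) (h : Hom C (sh A)) :
  dist (Tri f g h) ->
  forall Z (y : Hom Z B), g \oc y = 0 -> exists x, y = f \oc x.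
Proof.
move=> d Z y gy; have [c [_ e2]] := dist_complete (dist_rot (dist_idm Z)) (dist_rot d)
  (a := y) (b := 0) (etrans (comp0l _ _) (esym gy)).
move: e2 => /=; rewrite shm1 compNr compNl comp1r => /oppr_inj.
have [x <-] := shm_surj c.
by rewrite -shmM => /shm_inj ->; exists x.
Qed.

Lemma dist_ext_snd A B C (f : Hom A B) (g : Hom B C) (h : Hom C (sh A)) :
  dist (Tri f g h) ->
  forall Z (y : Hom B Z), y \oc f = 0 -> exists z, y = z \oc g.
Proof.
move=> d Z y yf; have [c [e1 _]] := dist_complete d (dist_zero_idm Z)
  (a := 0) (b := y) (etrans yf (esym (comp0l _ _))).
by exists c; move: e1 => /= ->; rewrite comp1l.
Qed.

Lemma dist_lift_snd A B C (f : Hom A B) (g : Hom B C) (h : Hom C (sh A)) :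
  dist (Tri f g h) ->
  forall Z (y : Hom Z C), h \oc y = 0 -> exists x, y = g \oc x.
Proof. by move=> /dist_rot; apply: dist_lift_fst. Qed.

Lemma dist_shift_lift A B C (f : Hom A B) (g : Hom B C) (h : Hom C (sh A)) :
  dist (Tri f g h) ->
  forall Z (y : Hom Z A), f \oc y = 0 ->
  exists w : Hom (sh Z) C, shm y = h \oc w.
Proof.
move=> /dist_rot2 d Z y fy; apply: (dist_lift_fst d).
by rewrite compNl -shmM fy shm0 oppr0.
Qed.

Lemma dist_ext_fst A B C (f : Hom A B) (g : Hom B C) (h : Hom C (sh A)) :
  dist (Tri f g h) ->
  forall Z (y : Hom A Z), shm y \oc h = 0 -> exists t, y = t \oc f.
Proof.
move=> /dist_rot2 d Z y yh; have [z ez] := dist_ext_snd d yh.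
have [t et] := shm_surj z.
by exists (- t); apply: shm_inj; rewrite ez shmM shmN compNr compNl et.
Qed.

Lemma dist_fst_cancel0 A B C (f : Hom A B) (g : Hom B C) (h : Hom C (sh A)) :
  dist (Tri f g h) ->
  forall Z (y : Hom Z A), f \oc y = 0 ->
  (forall w : Hom (sh Z) C, w = 0) -> y = 0.
Proof.
move=> d Z y fy H; have [w ew] := dist_shift_lift d fy.
by apply: shm_inj; rewrite ew (H w) comp0r shm0.
Qed.

Lemma dist_rot_back A B C (f : Hom A B) (g : Hom B C) (h : Hom C (sh A)) :
  dist (Tri f g h) ->
  exists (i : Hom (ush C) A) (e : Hom C (sh (ush C))),
  eps C \oc e = idm C /\ dist (Tri i f (e \oc g)).
Proof.
move=> d; have [e [e_eps eps_e]] := eps_iso C.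
have [i ei] := shm_surj (- (h \oc eps C)).
exists i, e; split=> //; apply: dist_rotK.
apply: (dist_iso (a := idm A) (b := idm B) (c := e) _ _ _ (is_iso_id A) (is_iso_id B) _ d).
- by rewrite comp1l comp1r.
- by rewrite comp1r.
- by rewrite shm1 comp1l ei opprK -compA eps_e comp1r.
- by exists (eps C).
Qed.

Lemma dist_split A B C (f : Hom A B) (g : Hom B C) :
  dist (Tri f g (0 : Hom C (sh A))) ->
  exists (p : Hom B A) (s : Hom C B),
    [/\ p \oc f = idm A, g \oc s = idm C & isomorphic B (bp A C)].
Proof.
move=> d; have gf := dist_comp0 d.
have f_mono Z (u : Hom Z A) : f \oc u = 0 -> u = 0.
  move=> fu; have [w ew] := dist_shift_lift d fu.
  by apply: shm_inj; rewrite ew comp0l shm0.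
have [s es] : exists s, idm C = g \oc s by apply: (dist_lift_snd d); rewrite comp0l.
have [p ep] : exists p, idm B - s \oc g = f \oc p.
  by apply: (dist_lift_fst d); rewrite compBr comp1r compA -es comp1l subrr.
have pf : p \oc f = idm A.
  apply/eqP; rewrite -subr_eq0; apply/eqP; apply: f_mono.
  by rewrite compBr compA -ep compBl comp1l comp1r -compA gf comp0r subr0 subrr.
have ps : p \oc s = 0.
  by apply: f_mono; rewrite compA -ep compBl comp1l -compA -es comp1r subrr.
exists p, s; split=> //; apply: (isomorphic_split_bp pf _ _ ps gf) => //.
by rewrite -ep subrK.
Qed.

Lemma dist_fst0_split A B C (g : Hom B C) (h : Hom C (sh A)) :
  dist (Tri (0 : Hom A B) g h) ->
  exists (p : Hom C B) (s : Hom (sh A) C),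
    [/\ p \oc g = idm B, h \oc s = idm (sh A) & isomorphic C (bp B (sh A))].
Proof. by move=> /dist_rot; rewrite shm0 oppr0; apply: dist_split. Qed.

Lemma dist_snd0_split A B C (f : Hom A B) (h : Hom C (sh A)) :
  dist (Tri f (0 : Hom B C) h) ->
  exists (i : Hom (ush C) A) (p : Hom A (ush C)),
    p \oc i = idm (ush C) /\ isomorphic A (bp (ush C) B).
Proof.
move=> /dist_rot_back [i [e [_]]]; rewrite comp0r => /dist_split [p [s [pi _ iA]]].
by exists i, p.
Qed.

(* [C'], [A'], [B'] are the cones of [f], [g], [g \oc f]; the octahedral triangle
   C' -> B' -> A' -> C'[1] has a vanishing map, hence splits. *)
Lemma octahedron_split_cone_snd A B C C' A' B' (f : Hom A B) (g : Hom B C)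
    (f' : Hom B C') (f'' : Hom C' (sh A)) (g' : Hom C A') (g'' : Hom A' (sh B))
    (h' : Hom C B') (h'' : Hom B' (sh A)) :
  dist (Tri f f' f'') -> dist (Tri g g' g'') -> dist (Tri (g \oc f) h' h'') ->
  (forall u : Hom C' B', u = 0) -> isomorphic A' (bp B' (sh C')).
Proof.
move=> df dg dgf u0.
have [u [v [duv _ _ _ _]]] := tc_TR4 df dg dgf.
by move: duv; rewrite (u0 u) => /dist_fst0_split [p [s []]].
Qed.

Lemma octahedron_split_cone_fst A B C C' A' B' (f : Hom A B) (g : Hom B C)
    (f' : Hom B C') (f'' : Hom C' (sh A)) (g' : Hom C A') (g'' : Hom A' (sh B))
    (h' : Hom C B') (h'' : Hom B' (sh A)) :
  dist (Tri f f' f'') -> dist (Tri g g' g'') -> dist (Tri (g \oc f) h' h'') ->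
  (forall v : Hom B' A', v = 0) -> isomorphic C' (bp (ush A') B').
Proof.
move=> df dg dgf v0.
have [u [v [duv _ _ _ _]]] := tc_TR4 df dg dgf.
by move: duv; rewrite (v0 v) => /dist_snd0_split [i [p []]].
Qed.

Lemma summand_closed_retract (P : Obj T -> Prop) Y Z (s : Hom Z Y) (p : Hom Y Z) :
  additive_subcat P -> summand_closed P -> P Y -> p \oc s = idm Z -> P Z.
Proof.
move=> [isoP _ _] sumP PY ps.
have [E [g [z d]]] := dist_cone s.
have z0 : z = 0.
  have := dist_comp0 (dist_rot2 d); rewrite compNl => /eqP; rewrite oppr_eq0 => /eqP sz.
  by rewrite -(comp1l z) -shm1 -ps shmM -compA sz comp0r.
move: d; rewrite z0 => /dist_split [_ [_ [_ _ iY]]].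
by case: (sumP _ _ (isoP _ _ iY PY)).
Qed.

End Triangles.

Section Subcategories.
Variables (T : TriCat) (P Q : Obj T -> Prop).
Implicit Types A B C : Obj T.

Lemma additive_subcat_iso A B : additive_subcat P -> isomorphic A B -> P A -> P B.
Proof. by case=> H _ _; apply: H. Qed.

Lemma additive_subcat_bp A B : additive_subcat P -> P A -> P B -> P (bp A B).
Proof. by case=> _ _ H; apply: H. Qed.

Lemma additive_subcat_split A B C : additive_subcat P ->
  isomorphic B (bp A C) -> P A -> P C -> P B.
Proof.
move=> hP iB PA PC; apply: (additive_subcat_iso hP (isomorphic_sym iB)).
exact: additive_subcat_bp.
Qed.

Lemma additive_subcat_cap :
  additive_subcat P -> additive_subcat Q -> additive_subcat (capP P Q).
Proof.
move=> [iP zP bP] [iQ zQ bQ]; split=> //.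
- by move=> A B iAB [PA QA]; split; [apply: (iP A) | apply: (iQ A)].
- by move=> A B [? ?] [? ?]; split; [apply: bP | apply: bQ].
Qed.

End Subcategories.

Section FactorsThrough.
Variables (T : TriCat) (X : Obj T -> Prop).
Hypothesis addX : additive_subcat X.
Implicit Types A B C Y : Obj T.

Lemma factors_through_tgt Y A (f : Hom A Y) : X Y -> factors_through X f.
Proof. by move=> XY; exists Y; split=> //; exists f, (idm Y); rewrite comp1l. Qed.

Lemma factors_through_src Y B (f : Hom Y B) : X Y -> factors_through X f.
Proof. by move=> XY; exists Y; split=> //; exists (idm Y), f; rewrite comp1r. Qed.

Lemma factors_through_compl A B C (g : Hom B C) (f : Hom A B) :
  factors_through X f -> factors_through X (g \oc f).
Proof.
case=> Y [XY [u [v ->]]]; exists Y; split=> //.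
by exists u, (g \oc v); rewrite compA.
Qed.

Lemma factors_through_compr A B C (g : Hom B C) (f : Hom A B) :
  factors_through X g -> factors_through X (g \oc f).
Proof.
case=> Y [XY [u [v ->]]]; exists Y; split=> //.
by exists (u \oc f), v; rewrite compA.
Qed.

Lemma factors_through_opp A B (f : Hom A B) :
  factors_through X f -> factors_through X (- f).
Proof. by case=> Y [XY [u [v ->]]]; exists Y; split=> //; exists u, (- v); rewrite compNl. Qed.

Lemma factors_through_add A B (f f' : Hom A B) :
  factors_through X f -> factors_through X f' -> factors_through X (f + f').
Proof.
case=> Y [XY [u [v ->]]] [Y' [XY' [u' [v' ->]]]].
exists (bp Y Y'); split; first exact: additive_subcat_bp.
exists (bi1 \oc u + bi2 \oc u'), (v \oc bp1 + v' \oc bp2).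
have [e1 e2 e3 e4 _] := bpE Y Y'.
rewrite !compDl !compDr -!compA !(compA bp1) !(compA bp2) e1 e2 e3 e4.
by rewrite !comp0l !comp0r !comp1l addr0 add0r.
Qed.

Lemma factors_through_sub A B (f f' : Hom A B) :
  factors_through X f -> factors_through X f' -> factors_through X (f - f').
Proof. by move=> Xf Xf'; apply: factors_through_add => //; apply: factors_through_opp. Qed.

Lemma quot_iso_of_inverses A B (s : Hom A B) (t1 t2 : Hom B A) :
  factors_through X (idm A - t1 \oc s) -> factors_through X (idm B - s \oc t2) ->
  quot_iso X s.
Proof.
move=> /factors_through_opp Xt1 /factors_through_opp Xt2.
rewrite !opprB in Xt1 Xt2; exists t1; split=> //.
have -> : s \oc t1 - idm B = s \oc ((t1 \oc s - idm A) \oc t2)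
    - (s \oc t1) \oc (s \oc t2 - idm B) + (s \oc t2 - idm B).
  have regroup (G : zmodType) (a b c d : G) : c - d = a - b - (a - c) + (b - d).
    by rewrite opprB addrAC (addrA (a - b)) subrK addrC (addrA (c - a)) subrK.
  by rewrite compBl !compBr !compA !comp1r; apply: regroup.
apply: factors_through_add => //; apply: factors_through_sub.
- by apply: factors_through_compl; apply: factors_through_compr.
- exact: factors_through_compl.
Qed.

Lemma factors_through_idm Y : summand_closed X ->
  factors_through X (idm Y) -> X Y.
Proof.
move=> sumX [Z [XZ [u [v e]]]].
exact: (summand_closed_retract (s := u) (p := v) addX sumX XZ (esym e)).
Qed.

Definition rperp_mod (S : Obj T -> Prop) Y :=
  forall A, S A -> forall f : Hom A Y, factors_through X f.
Definition lperp_mod (S : Obj T -> Prop) Y :=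
  forall B, S B -> forall f : Hom Y B, factors_through X f.

Variable S : Obj T -> Prop.

Lemma rperp_mod_of Y : X Y -> rperp_mod S Y.
Proof. by move=> XY A _ f; apply: factors_through_tgt. Qed.

Lemma lperp_mod_of Y : X Y -> lperp_mod S Y.
Proof. by move=> XY B _ f; apply: factors_through_src. Qed.

Lemma rperp_mod_iso A B : isomorphic A B -> rperp_mod S A -> rperp_mod S B.
Proof.
case=> f [g [_ fg]] SA Z SZ y.
by rewrite -[y]comp1l -fg -compA; apply: factors_through_compl; apply: SA.
Qed.

Lemma lperp_mod_iso A B : isomorphic A B -> lperp_mod S A -> lperp_mod S B.
Proof.
case=> f [g [_ fg]] SA Z SZ y.
by rewrite -[y]comp1r -fg compA; apply: factors_through_compr; apply: SA.
Qed.

Lemma rperp_mod_bp A B : rperp_mod S A -> rperp_mod S B -> rperp_mod S (bp A B).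
Proof.
move=> SA SB Z SZ y; have [_ _ _ _ e5] := bpE A B.
rewrite -[y]comp1l -e5 compDl -!compA.
by apply: factors_through_add; apply: factors_through_compl; [apply: SA | apply: SB].
Qed.

Lemma lperp_mod_bp A B : lperp_mod S A -> lperp_mod S B -> lperp_mod S (bp A B).
Proof.
move=> SA SB Z SZ y; have [_ _ _ _ e5] := bpE A B.
rewrite -[y]comp1r -e5 compDr !compA.
by apply: factors_through_add; apply: factors_through_compr; [apply: SA | apply: SB].
Qed.

End FactorsThrough.

Section TriangulatedSubcategory.
Variables (T : TriCat) (N : Obj T -> Prop).
Hypothesis hN : triangulated_subcat N.
Implicit Types A B C : Obj T.

Lemma addN : additive_subcat N.
Proof. by case: hN. Qed.

Lemma N_sh A : N A -> N (sh A).
Proof. by case: hN => _ H _ _; apply: H. Qed.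

Lemma N_ush A : N A -> N (ush A).
Proof. by case: hN => _ _ H _; apply: H. Qed.

Lemma N_of_sh A : N (sh A) -> N A.
Proof.
by move=> /N_ush; apply: (additive_subcat_iso addN (isomorphic_sym (isomorphic_eta A))).
Qed.

Lemma N_of_ush A : N (ush A) -> N A.
Proof. by move=> /N_sh; apply: (additive_subcat_iso addN (isomorphic_eps A)). Qed.

Lemma dist_N_thd A B C (f : Hom A B) (g : Hom B C) (h : Hom C (sh A)) :
  dist (Tri f g h) -> N A -> N B -> N C.
Proof. by case: hN => _ _ _ H d; apply: (H _ d). Qed.

Lemma dist_N_fst A B C (f : Hom A B) (g : Hom B C) (h : Hom C (sh A)) :
  dist (Tri f g h) -> N B -> N C -> N A.
Proof. by move=> /dist_rot d NB NC; apply: N_of_sh; apply: (dist_N_thd d). Qed.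

Lemma dist_N_snd A B C (f : Hom A B) (g : Hom B C) (h : Hom C (sh A)) :
  dist (Tri f g h) -> N A -> N C -> N B.
Proof.
by move=> /dist_rot2 d NA NC; apply: N_of_sh; apply: (dist_N_thd d) => //; apply: N_sh.
Qed.

End TriangulatedSubcategory.

Section LocalizationTriple.
Variables (T : TriCat) (N U V : Obj T -> Prop).
Hypotheses (hN : triangulated_subcat N) (hU : additive_subcat U) (hV : additive_subcat V)
  (tU : torsion_pair U (rperp U)) (tV : torsion_pair (lperp V) V).
Local Notation X := (capP (capP U V) N).
Hypotheses (sumX : summand_closed X)
  (rperpU_shift : subP (shift_down (rperp U)) (capP V N))
  (lperpV_shift : subP (shift_up (lperp V)) (capP U N)).
Implicit Types A B C D Q R Y Z : Obj T.

Lemma addX : additive_subcat X.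
Proof. by apply: additive_subcat_cap; [apply: additive_subcat_cap | apply: addN]. Qed.

Lemma U_torsion_triangle Y : exists Q D (f : Hom Q Y) (g : Hom Y D) (h : Hom D (sh Q)),
  [/\ dist (Tri f g h), U Q & rperp U D].
Proof. by case: tU => _ _ _ H; apply: H. Qed.

Lemma V_torsion_triangle Y : exists C R (f : Hom C Y) (g : Hom Y R) (h : Hom R (sh C)),
  [/\ dist (Tri f g h), lperp V C & V R].
Proof. by case: tV => _ _ _ H; apply: H. Qed.

Lemma rperpU_ush D : rperp U D -> V (ush D) /\ N (ush D).
Proof.
by move=> DD; apply: rperpU_shift; exists D; split=> //; apply: isomorphic_refl.
Qed.

Lemma lperpV_sh C : lperp V C -> U (sh C) /\ N (sh C).
Proof.
by move=> CC; apply: lperpV_shift; exists C; split=> //; apply: isomorphic_refl.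
Qed.

Lemma rperpU_N D : rperp U D -> N D.
Proof. by move=> /rperpU_ush [_ /(N_of_ush hN)]. Qed.

Lemma VN_rperp_mod Y : V Y -> N Y -> rperp_mod X U Y.
Proof.
move=> VY NY Z UZ y.
have [Q [D [f [g [h [d UQ DD]]]]]] := U_torsion_triangle Y.
have [x ->] : exists x, y = f \oc x by apply: (dist_lift_fst d); apply: DD.
have [C [R [k [r [w [dr CC VR]]]]]] := V_torsion_triangle Q.
have [UsC NsC] := lperpV_sh CC.
have k0 : k = 0 by apply: (dist_fst_cancel0 d); [apply: CC | move=> u; apply: DD].
move: dr; rewrite k0 => /dist_fst0_split [p [_ [pr _ iR]]].
have NQ : N Q := dist_N_fst hN d NY (rperpU_N DD).
exists R; split; last by exists (r \oc x), (f \oc p); rewrite -compA (compA p) pr comp1l.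
split; [split=> // |].
- exact: (additive_subcat_split hU iR UQ UsC).
- exact: (additive_subcat_split (addN hN) iR NQ NsC).
Qed.

Lemma UN_lperp_mod Y : U Y -> N Y -> lperp_mod X V Y.
Proof.
move=> UY NY Z VZ y.
have [C [R [k [r [w [d CC VR]]]]]] := V_torsion_triangle Y.
have [z ->] : exists z, y = z \oc r by apply: (dist_ext_snd d); apply: CC.
have [UsC NsC] := lperpV_sh CC.
have NR : N R := dist_N_snd hN (dist_rot d) NY NsC.
have [Q [D [q [g [h [dq UQ DD]]]]]] := U_torsion_triangle R.
have gr : g \oc r = 0 by apply: DD.
have g0 : g = 0.
  by have [u ->] := dist_ext_snd (dist_rot d) gr; rewrite (DD _ UsC u) comp0l.
have [x ex] := dist_lift_fst dq gr.
move: dq; rewrite g0 => /dist_snd0_split [_ [_ [_ iQ]]].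
have [VuD NuD] := rperpU_ush DD.
exists Q; split; last by exists x, (z \oc q); rewrite ex compA.
split; [split=> // |].
- exact: (additive_subcat_split hV iQ VuD VR).
- exact: (additive_subcat_split (addN hN) iQ NuD NR).
Qed.

Lemma X_of_UN_retract_V Y Y0 (i : Hom Y Y0) (p : Hom Y0 Y) :
  U Y -> N Y -> V Y0 -> p \oc i = idm Y -> X Y.
Proof.
move=> UY NY VY0 pi.
have [C [R [k [r [w [d CC VR]]]]]] := V_torsion_triangle Y.
have [UsC NsC] := lperpV_sh CC.
have k0 : k = 0 by rewrite -[k]comp1l -pi -compA (CC _ VY0 (i \oc k)) comp0r.
move: d; rewrite k0 => /dist_fst0_split [_ [_ [_ _ iR]]].
have XR : X (bp Y (sh C)).
  split; [split|].
  - exact: additive_subcat_bp.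
  - exact: (additive_subcat_iso hV iR VR).
  - exact: (additive_subcat_bp (addN hN)).
by case: (sumX XR).
Qed.

Lemma X_of_VN_retract_U Y Y0 (i : Hom Y Y0) (p : Hom Y0 Y) :
  V Y -> N Y -> U Y0 -> p \oc i = idm Y -> X Y.
Proof.
move=> VY NY UY0 pi.
have [Q [D [q [g [h [d UQ DD]]]]]] := U_torsion_triangle Y.
have g0 : g = 0 by rewrite -[g]comp1r -pi compA (DD _ UY0 (g \oc p)) comp0l.
move: d; rewrite g0 => /dist_snd0_split [_ [_ [_ iQ]]].
have [VuD NuD] := rperpU_ush DD.
have XQ : X (bp (ush D) Y).
  split; [split|].
  - exact: (additive_subcat_iso hU iQ UQ).
  - exact: additive_subcat_bp.
  - exact: (additive_subcat_bp (addN hN)).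
by case: (sumX XQ).
Qed.

Lemma shm_factors_via_rperpU Q Q' D (w : Hom (sh Q) D) (h : Hom D (sh Q')) :
  U Q -> rperp U D -> exists u : Hom Q Q', shm u = h \oc w /\ factors_through X u.
Proof.
move=> UQ DD; have [e [_ eps_e]] := eps_iso D.
have [rho erho] := shm_surj (e \oc w).
have [VuD NuD] := rperpU_ush DD.
have [X1 [XX1 [a [b eab]]]] := VN_rperp_mod VuD NuD UQ rho.
have [phi ephi] := shm_surj ((h \oc eps D) \oc shm b).
exists (phi \oc a); split; last by exists X1; split=> //; exists a, phi.
by rewrite shmM ephi -!compA -shmM -eab erho (compA (eps D)) eps_e comp1l.
Qed.

Lemma N_of_rperp_mod W : rperp_mod X U W -> N W.
Proof.
move=> HW.
have [Q [D [x [g [h [d UQ DD]]]]]] := U_torsion_triangle W.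
have [X0 [XX0 [g0 [h0 ex]]]] := HW _ UQ x.
have [k ek] : exists k, h0 = x \oc k.
  by apply: (dist_lift_fst d); case: XX0 => [[UX0 _] _]; apply: DD.
have [w ew] : exists w, shm (idm Q - k \oc g0) = h \oc w.
  by apply: (dist_shift_lift d); rewrite compBr comp1r compA -ek -ex subrr.
have [u [eu Xu]] := shm_factors_via_rperpU w h UQ DD.
have ue : idm Q - k \oc g0 = u by apply: shm_inj; rewrite ew eu.
have [[_ _] NQ] : X Q.
  apply: (factors_through_idm addX sumX).
  rewrite -[idm Q](subrK (k \oc g0)) ue; apply: (factors_through_add addX) => //.
  by apply: factors_through_compl; apply: factors_through_tgt.
exact: (dist_N_snd hN d NQ (rperpU_N DD)).
Qed.

Lemma N_of_lperp_mod W : lperp_mod X V W -> N W.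
Proof.
move=> HW.
have [C [R [k [r [w [d CC VR]]]]]] := V_torsion_triangle W.
have [UsC NsC] := lperpV_sh CC.
have [X0 [XX0 [g0 [h0 er]]]] := HW _ VR r.
have [k0 ek] : exists k0, g0 = k0 \oc r.
  by apply: (dist_ext_snd d); case: XX0 => [[_ VX0] _]; apply: CC.
have [z ez] : exists z, idm R - h0 \oc k0 = z \oc w.
  by apply: (dist_ext_snd (dist_rot d)); rewrite compBl comp1l -compA -ek -er subrr.
have [[_ _] NR] : X R.
  apply: (factors_through_idm addX sumX).
  rewrite -[idm R](subrK (h0 \oc k0)) ez; apply: (factors_through_add addX).
    by apply: factors_through_compr; apply: UN_lperp_mod.
  by apply: factors_through_compr; apply: factors_through_src.
exact: (dist_N_fst hN (dist_rot d) NR NsC).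
Qed.

Definition U_approx_triangle A : Prop :=
  exists (W Q : Obj T) (a : Hom (ush A) W) (b : Hom W Q) (c : Hom Q (sh (ush A))),
    [/\ dist (Tri a b c), precover U (eps A \oc c), qrperp allP X U W &
        (V A -> capP U V Q /\ qrperp V X (capP U V) W)].

Definition V_approx_triangle A : Prop :=
  exists (R W : Obj T) (j : Hom A R) (b : Hom R W) (c : Hom W (sh A)),
    [/\ dist (Tri j b c), preenvelope V j, qlperp allP X V W &
        (U A -> capP U V R /\ qlperp U X (capP U V) W)].

Lemma U_approx_of_cone A Q D (f : Hom Q A) (g : Hom A D) (h : Hom D (sh Q)) :
  dist (Tri f g h) -> U Q -> Yepic U f -> rperp_mod X U (ush D) ->
  (V A -> V Q /\ V (ush D)) -> U_approx_triangle A.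
Proof.
(* Rotating back twice gives the triangle A[-1] -> D[-1] -> Q -> A[-1][1]. *)
move=> d UQ epi_f HW HV.
have [i [e [_ di]]] := dist_rot_back d.
have [i' [eA [eA_e di']]] := dist_rot_back di.
exists (ush D), Q, i', i, (eA \oc f); split=> //.
- by rewrite compA eA_e comp1l.
- by move=> /HV [VQ VW]; split=> //; split=> // Z [UZ _]; apply: HW.
Qed.

Lemma V_approx_of_cone A R W (j : Hom A R) (b : Hom R W) (c : Hom W (sh A)) :
  dist (Tri j b c) -> V R -> Ymonic V j -> lperp_mod X V W ->
  (U A -> U R /\ U W) -> V_approx_triangle A.
Proof.
move=> d VR mono_j HW HU.
exists R, W, j, b, c; split=> //.
by move=> /HU [UR UW]; split=> //; split=> // Z [_ VZ]; apply: HW.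
Qed.

Lemma Yepic_rperpU_cone A Q D (f : Hom Q A) (g : Hom A D) (h : Hom D (sh Q)) :
  dist (Tri f g h) -> rperp U D -> Yepic U f.
Proof.
move=> d DD Z UZ y.
by have [x ->] := dist_lift_fst d (DD _ UZ (g \oc y)); exists x.
Qed.

Lemma Ymonic_lperpV_cone A C R (k : Hom C A) (r : Hom A R) (w : Hom R (sh C)) :
  dist (Tri k r w) -> lperp V C -> Ymonic V r.
Proof.
move=> d CC Z VZ y.
by have [z ->] := dist_ext_snd d (CC _ VZ (y \oc k)); exists z.
Qed.

Lemma U_approx_triangle_V A : V A -> U_approx_triangle A.
Proof.
move=> VA.
have [Q [D [f [g [h [d UQ DD]]]]]] := U_torsion_triangle A.
have [C [R [k [r [w [dr CC VR]]]]]] := V_torsion_triangle Q.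
have [UsC NsC] := lperpV_sh CC.
have k0 : k = 0 by apply: (dist_fst_cancel0 d); [apply: CC | move=> u; apply: DD].
have dr' := dist_rot dr; rewrite k0 in dr dr'.
have [p [s [pr ws iR]]] := dist_fst0_split dr.
have XsC : X (sh C) := X_of_UN_retract_V UsC NsC VR ws.
have [Dt [gt [ht dt]]] := dist_cone (f \oc p).
have dfpr : dist (Tri ((f \oc p) \oc r) g h) by rewrite -compA pr comp1r.
have iDt := octahedron_split_cone_snd dr' dt dfpr (DD _ UsC).
have iW : isomorphic (ush Dt) (bp (ush D) (ush (sh (sh C)))).
  exact: (isomorphic_trans (isomorphic_ush iDt) (ush_bp _ _)).
have XusC : X (ush (sh (sh C))) := additive_subcat_iso addX (isomorphic_eta _) XsC.
have [VuD NuD] := rperpU_ush DD.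
apply: (U_approx_of_cone dt).
- exact: (additive_subcat_split hU iR UQ UsC).
- move=> Z UZ y; have [x <-] := Yepic_rperpU_cone d DD UZ y.
  by exists (r \oc x); rewrite -compA (compA p) pr comp1l.
- apply: (rperp_mod_iso (isomorphic_sym iW)).
  exact: (rperp_mod_bp addX (VN_rperp_mod VuD NuD) (rperp_mod_of XusC)).
- split=> //; apply: (additive_subcat_split hV iW VuD).
  by case: XusC => [[]].
Qed.

Lemma V_approx_triangle_U A : U A -> V_approx_triangle A.
Proof.
move=> UA.
have [C [R [k [r [w [d CC VR]]]]]] := V_torsion_triangle A.
have [UsC NsC] := lperpV_sh CC.
have [Q [D [q [g [h [dq UQ DD]]]]]] := U_torsion_triangle R.
have [VuD NuD] := rperpU_ush DD.
have gr : g \oc r = 0 by apply: DD.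
have g0 : g = 0.
  by have [u ->] := dist_ext_snd (dist_rot d) gr; rewrite (DD _ UsC u) comp0l.
have [j ej] := dist_lift_fst dq gr.
rewrite g0 in dq.
have [i [p [pi iQ]]] := dist_snd0_split dq.
have XuD : X (ush D) := X_of_VN_retract_U VuD NuD UQ pi.
have [W [b [c dj]]] := dist_cone j.
have dqj : dist (Tri (q \oc j) w (- shm k)) by rewrite -ej; apply: dist_rot.
have iW := octahedron_split_cone_fst dj dq dqj (DD _ UsC).
apply: (V_approx_of_cone dj).
- exact: (additive_subcat_split hV iQ VuD VR).
- move=> Z VZ y; have [z <-] := Ymonic_lperpV_cone d CC VZ y.
  by exists (z \oc q); rewrite ej compA.
- apply: (lperp_mod_iso (isomorphic_sym iW)).
  exact: (lperp_mod_bp addX (lperp_mod_of XuD) (UN_lperp_mod UsC NsC)).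
- split=> //; apply: (additive_subcat_split hU iW _ UsC).
  by case: XuD => [[]].
Qed.

Lemma has_U_approx_triangle A : U_approx_triangle A.
Proof.
case: (classic (V A)) => [|nVA]; first exact: U_approx_triangle_V.
have [Q [D [f [g [h [d UQ DD]]]]]] := U_torsion_triangle A.
have [VuD NuD] := rperpU_ush DD.
apply: (U_approx_of_cone d UQ (Yepic_rperpU_cone d DD) (VN_rperp_mod VuD NuD)).
by move=> /nVA.
Qed.

Lemma has_V_approx_triangle A : V_approx_triangle A.
Proof.
case: (classic (U A)) => [|nUA]; first exact: V_approx_triangle_U.
have [C [R [k [r [w [d CC VR]]]]]] := V_torsion_triangle A.
have [UsC NsC] := lperpV_sh CC.
apply: (V_approx_of_cone (dist_rot d) VR (Ymonic_lperpV_cone d CC) (UN_lperp_mod UsC NsC)).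
by move=> /nUA.
Qed.

Lemma N_loc_triple_UXV : N_loc_triple N U X V.
Proof.
split=> //.
- split.
  + by split=> //; exact: addX.
  + by move=> A [].
  + by [].
  + by move=> A _; apply: has_U_approx_triangle.
  + by move=> A _; apply: has_V_approx_triangle.
- by move=> W [_]; apply: N_of_rperp_mod.
- by move=> W [_]; apply: N_of_lperp_mod.
Qed.

Lemma hom_UN_shV_eq0 : eqP' (shift_up (lperp V)) (capP U N) ->
  forall Q A (x : Hom Q (sh A)), U Q -> N Q -> V A -> x = 0.
Proof.
move=> H Q A x UQ NQ VA.
have [C [CC [phi [psi [psi_phi _]]]]] := proj2 (H Q) (conj UQ NQ).
have [z ez] := shm_surj (x \oc psi).
by rewrite -[x]comp1r -psi_phi compA -ez (CC _ VA z) shm0 comp0l.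
Qed.

Lemma hom_U_shVN_eq0 : eqP' (shift_down (rperp U)) (capP V N) ->
  forall R Z (x : Hom Z (sh R)), V R -> N R -> U Z -> x = 0.
Proof.
move=> H R Z x VR NR UZ.
have [D [DD iR]] := proj2 (H R) (conj VR NR).
have [phi [psi [psi_phi _]]] :=
  isomorphic_trans (isomorphic_sh iR) (isomorphic_eps D).
by rewrite -[x]comp1l -psi_phi -compA (DD _ UZ (phi \oc x)) comp0r.
Qed.

Lemma verdier_of_shift_up_eq :
  eqP' (shift_up (lperp V)) (capP U N) -> verdier_cond N U X V.
Proof.
move=> H A B M s g h dT [UA VA] [UB VB] NM.
have [Q [D [q [d [e [dq UQ DD]]]]]] := U_torsion_triangle M.
have NQ : N Q := dist_N_fst hN dq NM (rperpU_N DD).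
have hq : h \oc q = 0 := hom_UN_shV_eq0 H _ UQ NQ VA.
have [rt ert] : exists rt, d = rt \oc h by apply: (dist_ext_snd (dist_rot dT)); apply: DD.
have [h1 eh1] := dist_ext_snd dq hq.
have [u [eu Xu]] := shm_factors_via_rperpU rt h1 UA DD.
have [t1 et1] : exists t1, idm A - u = t1 \oc s.
  by apply: (dist_ext_fst dT); rewrite shmB shm1 compBl comp1l eu -compA -ert -eh1 subrr.
have [ga ega] := dist_lift_snd dT hq.
have [g1 eg1] : exists g1, g = q \oc g1 by apply: (dist_lift_fst dq); apply: DD.
have [t2 et2] : exists t2, idm B - ga \oc g1 = s \oc t2.
  by apply: (dist_lift_fst dT); rewrite compBr comp1r compA -ega -eg1 subrr.
apply: (quot_iso_of_inverses addX (t1 := t1) (t2 := t2)).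
  by rewrite -et1 subKr.
rewrite -et2 subKr; apply: factors_through_compr.
exact: (UN_lperp_mod UQ NQ VB).
Qed.

Lemma verdier_of_shift_down_eq :
  eqP' (shift_down (rperp U)) (capP V N) -> verdier_cond N U X V.
Proof.
move=> H A B M s g h dT [UA VA] [UB VB] NM.
have [i [eM [_ di]]] := dist_rot_back dT.
have [C [R [k [r [w [dV CC VR]]]]]] := V_torsion_triangle (ush M).
have [UsC NsC] := lperpV_sh CC.
have NR : N R := dist_N_snd hN (dist_rot dV) (N_ush hN NM) NsC.
have [i' ei'] : exists i', i = i' \oc r by apply: (dist_ext_snd dV); apply: CC.
have [rho erho] : exists rho, r = rho \oc i.
  by apply: (dist_ext_fst di); apply: (hom_U_shVN_eq0 H _ VR NR UB).
have [t1 et1] : exists t1, idm A - i' \oc rho = t1 \oc s.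
  by apply: (dist_ext_snd di); rewrite compBl comp1l -compA -erho -ei' subrr.
have [g1 eg1] : exists g1, eM \oc g = (- shm k) \oc g1.
  apply: (dist_lift_snd (dist_rot2 dV)).
  by rewrite compNl (hom_U_shVN_eq0 H (shm r \oc (eM \oc g)) VR NR UB) oppr0.
have [ga ega] : exists ga, - shm k = (eM \oc g) \oc ga.
  apply: (dist_lift_snd (dist_rot di)).
  by rewrite compNl compNr opprK -shmM (CC _ VA (i \oc k)) shm0.
have [t2 et2] : exists t2, idm B - ga \oc g1 = s \oc t2.
  by apply: (dist_lift_fst (dist_rot di)); rewrite compBr comp1r compA -ega -eg1 subrr.
apply: (quot_iso_of_inverses addX (t1 := t1) (t2 := t2)).
  rewrite -et1 subKr; apply: factors_through_compl.
  exact: (VN_rperp_mod VR NR UA).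
rewrite -et2 subKr; apply: factors_through_compr.
exact: (UN_lperp_mod UsC NsC VB).
Qed.

End LocalizationTriple.

Theorem lemma4p3 (T : TriCat) (N U V : Obj T -> Prop) :
  triangulated_subcat N ->
  additive_subcat U -> additive_subcat V ->
  torsion_pair U (rperp U) -> torsion_pair (lperp V) V ->
  summand_closed (capP (capP U V) N) ->
  subP (shift_down (rperp U)) (capP V N) ->
  subP (shift_up (lperp V)) (capP U N) ->
  [/\ N_loc_triple N U (capP (capP U V) N) V,
      (eqP' (shift_up (lperp V)) (capP U N) ->
         verdier_cond N U (capP (capP U V) N) V) &
      (eqP' (shift_down (rperp U)) (capP V N) ->
         verdier_cond N U (capP (capP U V) N) V)].
Proof.
move=> hN hU hV tU tV sumX hD hC; split.
- exact: N_loc_triple_UXV.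
- exact: verdier_of_shift_up_eq.
- exact: verdier_of_shift_down_eq.
Qed.
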